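(* Let $(\mathcal{G},S)$ be an instance of \textsc{Temporally Disjoint Walks} where $\mathcal{G}$ is a temporal line, and let $\mathcal{S}$ be a solution that minimizes the sum of the lengths of its walks among all solutions. Let $W\in\mathcal{S}$ be a temporal $(s,z)$-walk. Then at most $2|S|$ pairs of transitions of the form $(a,b,t),(b,a,t')$ with $t<t'$ are consecutive in $W$.
   Context: A temporal graph $\mathcal{G}=(V,E_1,\ldots,E_T)$ has vertex set $V$ and edge sets $E_1,\ldots,E_T\subseteq\binom{V}{2}$; it is a temporal line if its underlying graph $(V,\bigcup_i E_i)$ is a path. A temporal $(s,z)$-walk of length $k$ from $s=v_0$ to $z=v_k$ is a sequence of transitions $((v_{i-1},v_i,t_i))_{i=1}^k$ with $\{v_{i-1},v_i\}\in E_{t_i}$ and $t_1<\cdots<t_k$. It occupies $v_i$ during $[t_i,t_{i+1}]$ for $i\in[k-1]$, $v_0$ during $[t_1,t_1]$ and $v_k$ during $[t_k,t_k]$. Two temporal walks are temporally disjoint unless some vertex is occupied by both during intersecting time intervals. \textsc{Temporally Disjoint Walks} asks, given $\mathcal{G}$ and a multiset $S\subseteq V\times V$ of source-sink pairs, for pairwise temporally disjoint temporal $(s_i,z_i)$-walks, one for each $(s_i,z_i)\in S$; a solution $\mathcal{S}$ is such a family, and $|S|$ is the number of source-sink pairs. *)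

From mathcomp Require Import all_boot.
Set Implicit Arguments. Unset Strict Implicit. Unset Printing Implicit Defensive.

(* A temporal graph over a finite vertex type V: a lifetime T and edge sets
   E t : {set {set V}} for t = 1..T (values of E outside [1,T] are ignored). *)

Section TG.
Variable V : finType.

Definition edge_at (T : nat) (E : nat -> {set {set V}}) (u v : V) (t : nat) : Prop :=
  1 <= t <= T /\ [set u; v] \in E t.

Definition is_temporal_graph (T : nat) (E : nat -> {set {set V}}) : Prop :=
  forall t e, 1 <= t <= T -> e \in E t -> #|e| = 2.

(* the underlying graph (V, \bigcup_t E_t) is a path: there is an ordering p
   of all vertices (each exactly once) such that {u,v} is an edge of the
   underlying graph iff u,v are consecutive in p *)
Definition temporal_line (T : nat) (E : nat -> {set {set V}}) : Prop :=
  exists p : seq V,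
    [/\ p <> [::], uniq p, (forall v, v \in p) &
     forall u v : V, (exists t, edge_at T E u v t) <->
       (exists2 i, i.+1 < size p &
          [set u; v] = [set nth u p i; nth u p i.+1])].

Definition transition := (V * V * nat)%type.
Definition tsrc (x : transition) : V := x.1.1.
Definition ttgt (x : transition) : V := x.1.2.
Definition ttime (x : transition) : nat := x.2.

(* W is a temporal (s,z)-walk; a walk of length 0 is the empty sequence
   and is an (s,z)-walk iff s = z *)
Fixpoint chain (W : seq transition) : Prop :=
  match W with
  | x :: ((y :: _) as W') => ttgt x = tsrc y /\ ttime x < ttime y /\ chain W'
  | _ => True
  end.

Definition is_walk (T : nat) (E : nat -> {set {set V}}) (s z : V)
  (W : seq transition) : Prop :=
  match W with
  | [::] => s = z
  | x :: _ =>
      [/\ tsrc x = s, ttgt (last x W) = z, chain W &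
       forall y, y \in W -> edge_at T E (tsrc y) (ttgt y) (ttime y)]
  end.

(* occupation intervals (v, l, r): W occupies v during [l, r] *)
Fixpoint mid_intervals (W : seq transition) : seq (V * nat * nat) :=
  match W with
  | x :: ((y :: _) as W') => (ttgt x, ttime x, ttime y) :: mid_intervals W'
  | _ => [::]
  end.

Definition occ_intervals (W : seq transition) : seq (V * nat * nat) :=
  match W with
  | [::] => [::]
  | x :: _ => (tsrc x, ttime x, ttime x) :: mid_intervals W
              ++ [:: (ttgt (last x W), ttime (last x W), ttime (last x W))]
  end.

Definition temp_disjoint (W1 W2 : seq transition) : Prop :=
  forall v a b c d,
    (v, a, b) \in occ_intervals W1 -> (v, c, d) \in occ_intervals W2 ->
    ~ (maxn a c <= minn b d).

(* a solution for the multiset S (a list of source-sink pairs): one walk per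
   pair (by position), pairwise temporally disjoint *)
Definition is_solution (T : nat) (E : nat -> {set {set V}})
  (S : seq (V * V)) (Ws : seq (seq transition)) : Prop :=
  [/\ size Ws = size S,
      (forall i (d : V * V), i < size S ->
         is_walk T E (nth d S i).1 (nth d S i).2 (nth [::] Ws i)) &
      forall i j, i < size S -> j < size S -> i <> j ->
         temp_disjoint (nth [::] Ws i) (nth [::] Ws j)].

Definition total_length (Ws : seq (seq transition)) : nat := sumn (map size Ws).

Definition n_backforth (W : seq transition) : nat :=
  match W with
  | [::] => 0
  | x :: _ =>
    count (fun j => [&& tsrc (nth x W j) == ttgt (nth x W j.+1),
                        ttgt (nth x W j) == tsrc (nth x W j.+1) &
                        ttime (nth x W j) < ttime (nth x W j.+1)])
          (iota 0 (size W).-1)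
  end.

End TG.

From mathcomp Require Import all_boot zify.
From Stdlib Require Import Classical.

Set Implicit Arguments. Unset Strict Implicit. Unset Printing Implicit Defensive.

(* A back-and-forth (a,b,t),(b,a,t') can be cut out of a walk, which then simply
   waits at a from before t until after t'.  This keeps the solution temporally
   disjoint unless another walk visits a during an interval nested strictly inside
   (t,t'); so in a length-minimal solution every back-and-forth is blocked by such a
   visit.  The blocking walk cannot be at b during [t,t'], so on a line it enters and
   leaves a through the other neighbour of a: it makes a back-and-forth in a strictly
   shorter window, unless the visit is its start or its end.  By induction on the
   window length, the window (t,t') of every back-and-forth contains the start or end
   time of some walk.  Windows of distinct back-and-forths of one walk are disjoint,
   and there are at most 2|S| start and end times. *)

Section Walks.
Variable V : finType.
Implicit Types (W : seq (transition V)) (v : V) (l r : nat).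
Variable x0 : transition V.

Lemma chainP W :
  chain W <-> forall i, i.+1 < size W ->
    ttgt (nth x0 W i) = tsrc (nth x0 W i.+1) /\ ttime (nth x0 W i) < ttime (nth x0 W i.+1).
Proof.
elim: W => [|x [|y W] IH] //=.
split=> [[xy [lt_xy /IH hW]] [|i] //= /hW//|hW].
by have [] := hW 0 erefl; split=> //; split=> //; apply/IH => i /(hW i.+1).
Qed.

Lemma mid_intervalsP W v l r :
  (v, l, r) \in mid_intervals W <->
  exists2 i, i.+1 < size W &
    [/\ v = ttgt (nth x0 W i), l = ttime (nth x0 W i) & r = ttime (nth x0 W i.+1)].
Proof.
elim: W => [|x [|y W] IH] /=; [by split=> // -[]|by split=> // -[]|].
rewrite in_cons; split=> [/orP[/eqP[-> -> ->]|/IH[i]]|[[|i]]]; first by exists 0.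
- by exists i.+1.
- by move=> _ [-> -> ->]; rewrite eqxx.
- by move=> ? ?; apply/orP; right; apply/IH; exists i.
Qed.

Lemma occ_intervalsP W v l r :
  (v, l, r) \in occ_intervals W <-> 0 < size W /\
  [\/ v = tsrc (nth x0 W 0) /\ l = ttime (nth x0 W 0) /\ r = l,
      exists2 i, i.+1 < size W &
        [/\ v = ttgt (nth x0 W i), l = ttime (nth x0 W i) & r = ttime (nth x0 W i.+1)]
    | v = ttgt (nth x0 W (size W).-1) /\ l = ttime (nth x0 W (size W).-1) /\ r = l].
Proof.
case: W => [|x W]; first by split=> // -[].
rewrite [occ_intervals _]/= nth_last in_cons mem_cat mem_seq1; split.
- case/or3P=> [/eqP[-> -> ->]|hmid|/eqP[-> -> ->]]; split=> //.
  + by apply: Or31.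
  + by apply: Or32; apply/mid_intervalsP.
  + by apply: Or33.
- case=> _ [[-> [-> ->]]|hmid|[-> [-> ->]]]; rewrite ?eqxx ?orbT //.
  by move/mid_intervalsP: hmid => ->; rewrite orbT.
Qed.

Lemma occ_first W : 0 < size W ->
  (tsrc (nth x0 W 0), ttime (nth x0 W 0), ttime (nth x0 W 0)) \in occ_intervals W.
Proof. by move=> W_gt0; apply/occ_intervalsP; split=> //; apply: Or31. Qed.

Lemma occ_mid W i : i.+1 < size W ->
  (ttgt (nth x0 W i), ttime (nth x0 W i), ttime (nth x0 W i.+1)) \in occ_intervals W.
Proof. by move=> iW; apply/occ_intervalsP; split; [lia|apply: Or32; exists i]. Qed.

Lemma occ_last W : 0 < size W ->
  (ttgt (nth x0 W (size W).-1), ttime (nth x0 W (size W).-1),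
   ttime (nth x0 W (size W).-1)) \in occ_intervals W.
Proof. by move=> W_gt0; apply/occ_intervalsP; split=> //; apply: Or33. Qed.

Lemma walkP T E s z W : 0 < size W ->
  is_walk T E s z W <->
  [/\ tsrc (nth x0 W 0) = s, ttgt (nth x0 W (size W).-1) = z, chain W &
      {in W, forall y, edge_at T E (tsrc y) (ttgt y) (ttime y)}].
Proof. by case: W => // x W _; rewrite nth_last; split=> -[]. Qed.

Lemma walk_chain T E s z W : is_walk T E s z W -> chain W.
Proof. by case: W => // x W []. Qed.

Lemma walk_edge T E s z W i : is_walk T E s z W -> i < size W ->
  edge_at T E (tsrc (nth x0 W i)) (ttgt (nth x0 W i)) (ttime (nth x0 W i)).
Proof. by case: W => // x W [_ _ _ hE] iW; apply/hE/mem_nth. Qed.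

Definition shortcut W j := take j W ++ drop j.+2 W.

Lemma size_shortcut W j : j.+1 < size W -> size (shortcut W j) = (size W).-2.
Proof. by move=> jW; rewrite size_cat size_takel ?size_drop; lia. Qed.

Lemma nth_shortcut W j i : j.+1 < size W ->
  nth x0 (shortcut W j) i = nth x0 W (if i < j then i else i.+2).
Proof.
move=> jW; rewrite nth_cat size_takel; last lia.
case: ifP => [ij|ij]; first by rewrite nth_take.
by rewrite nth_drop; congr nth; move: ij; lia.
Qed.

Lemma shortcut_walk T E s z W j :
  is_walk T E s z W -> j.+1 < size W -> tsrc (nth x0 W j) = ttgt (nth x0 W j.+1) ->
  is_walk T E s z (shortcut W j).
Proof.
move=> hW jW ret; have W_gt0 : 0 < size W by lia.
have [src_s tgt_z /chainP hc hE] := (walkP T E s z W_gt0).1 hW.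
have size_sc := size_shortcut jW.
have [W2|sc_gt0] := posnP (size W).-2.
  have -> : shortcut W j = [::] by apply: size0nil; rewrite size_sc.
  have j0 : j = 0 by lia.
  by subst j; rewrite -src_s -tgt_z ret; congr (ttgt (nth _ _ _)); lia.
have sc_gt0' : 0 < size (shortcut W j) by rewrite size_sc.
apply/(walkP _ _ _ _ sc_gt0'); split.
- rewrite nth_shortcut //; case: (posnP j) => [j0|_] //.
  subst j; rewrite /=; have [<- _] := hc 1 ltac:(lia); by rewrite -ret.
- rewrite size_sc nth_shortcut //; case: ifP => [lt_j|ge_j].
  + have -> : (size W).-2.-1 = j.-1 by move: lt_j; lia.
    have [-> _] := hc j.-1 ltac:(lia).
    rewrite prednK ?ret -?tgt_z; last by move: lt_j; lia.
    by congr (ttgt (nth _ _ _)); move: lt_j; lia.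
  + by rewrite -tgt_z; congr (ttgt (nth _ _ _)); move: ge_j; lia.
- apply/chainP => i; rewrite size_sc => iW; rewrite !nth_shortcut //.
  case: (ltngtP i.+1 j) => [ij|ij|ij]; try by apply: hc; lia.
  subst j.
  have [e1 t1] := hc i ltac:(lia); have [_ t2] := hc i.+1 ltac:(lia).
  have [e3 t3] := hc i.+2 ltac:(lia).
  by split; [rewrite e1 ret e3|lia].
- by move=> y; rewrite mem_cat => /orP[/mem_take|/mem_drop]; apply: hE.
Qed.

Lemma occ_shortcut W j v l r :
  chain W -> j.+1 < size W -> tsrc (nth x0 W j) = ttgt (nth x0 W j.+1) ->
  (v, l, r) \in occ_intervals (shortcut W j) ->
  (exists l' r', [/\ (v, l', r') \in occ_intervals W, l' <= l & r <= r']) \/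
  [/\ v = tsrc (nth x0 W j), (v, l, ttime (nth x0 W j)) \in occ_intervals W,
      (v, ttime (nth x0 W j.+1), r) \in occ_intervals W,
      l <= ttime (nth x0 W j) & ttime (nth x0 W j.+1) <= r].
Proof.
move=> /chainP hc jW ret /occ_intervalsP[]; rewrite size_shortcut // => sc_gt0.
case=> [[-> [-> ->]]|[i iW [-> -> ->]]|[-> [-> ->]]]; rewrite !nth_shortcut //.
- case: (posnP j) => [j0|_]; last first.
    by left; do 2!eexists; split; [apply: occ_first; lia| |].
  subst j; have [e1 t1] := hc 1 ltac:(lia).
  left; exists (ttime (nth x0 W 1)), (ttime (nth x0 W 2)); rewrite -e1.
  by split; [apply: occ_mid; lia|lia|].
- case: (ltngtP i.+1 j) => ij.
  + by left; do 2!eexists; split; [apply: occ_mid; lia| |].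
  + by left; do 2!eexists; split; [apply: occ_mid; lia| |].
  + subst j; have [e1 t1] := hc i ltac:(lia); have [_ t3] := hc i.+2 ltac:(lia).
    right; rewrite e1; split; [done|by rewrite -e1; apply: occ_mid; lia| |lia|lia].
    by rewrite ret; apply: occ_mid; lia.
- case: ifP => [lt_j|ge_j].
  + have -> : (size W).-2.-1 = j.-1 by move: lt_j; lia.
    have [e t] := hc j.-1 ltac:(lia).
    left; exists (ttime (nth x0 W j.-1)), (ttime (nth x0 W j.-1.+1)).
    by split; [apply: occ_mid; lia|lia|lia].
  + have -> : (size W).-2.-1.+2 = (size W).-1 by move: ge_j; lia.
    by left; do 2!eexists; split; [apply: occ_last; lia| |].
Qed.

Lemma occ_before W i : chain W -> i < size W ->
  exists2 l, l <= ttime (nth x0 W i) &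
    (tsrc (nth x0 W i), l, ttime (nth x0 W i)) \in occ_intervals W.
Proof.
move=> /chainP hc; case: i => [|i] iW; first by exists (ttime (nth x0 W 0)); rewrite ?occ_first.
have [<- lt_i] := hc i iW.
by exists (ttime (nth x0 W i)); [apply: ltnW|apply: occ_mid].
Qed.

Lemma occ_after W i : chain W -> i < size W ->
  exists2 r, ttime (nth x0 W i) <= r &
    (ttgt (nth x0 W i), ttime (nth x0 W i), r) \in occ_intervals W.
Proof.
move=> /chainP hc iW; case: (ltnP i.+1 (size W)) => iW'.
  by exists (ttime (nth x0 W i.+1)); [apply: ltnW; case: (hc i iW')|apply: occ_mid].
have -> : i = (size W).-1 by lia.
by exists (ttime (nth x0 W (size W).-1)); rewrite ?occ_last //; lia.
Qed.

Lemma temp_disjoint_sym W1 W2 : temp_disjoint W1 W2 -> temp_disjoint W2 W1.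
Proof. by move=> h v a b c d h1 h2; rewrite maxnC minnC; apply: h h2 h1. Qed.

Lemma shortcut_temp_disjoint W W' j :
  chain W -> j.+1 < size W -> tsrc (nth x0 W j) = ttgt (nth x0 W j.+1) ->
  temp_disjoint W W' ->
  (forall c d : nat, (tsrc (nth x0 W j), c, d) \in occ_intervals W' ->
     ~ (ttime (nth x0 W j) < c /\ d < ttime (nth x0 W j.+1))) ->
  temp_disjoint (shortcut W j) W'.
Proof.
move=> hc jW ret disj no_nested v a b c d /(occ_shortcut hc jW ret).
case=> [[l' [r' [occ_W le_l le_r]]]|[-> occ_l occ_r le_l le_r]] occ_W' overlap.
  by apply: (disj v l' r' c d occ_W occ_W'); lia.
have := disj _ _ _ _ _ occ_l occ_W'; have := disj _ _ _ _ _ occ_r occ_W'.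
have := no_nested c d occ_W'; have [_] := (chainP W).1 hc j jW; lia.
Qed.

Definition end_times W : seq nat :=
  if W is x :: W' then [:: ttime x; ttime (last x W')] else [::].

Lemma end_times_first W : 0 < size W -> ttime (nth x0 W 0) \in end_times W.
Proof. by case: W => // x W _; rewrite inE eqxx. Qed.

Lemma end_times_last W : 0 < size W -> ttime (nth x0 W (size W).-1) \in end_times W.
Proof. by case: W => // x W _; rewrite nth_last !inE eqxx orbT. Qed.

Definition all_end_times (Ws : seq (seq (transition V))) := flatten (map end_times Ws).

Lemma size_all_end_times Ws : size (all_end_times Ws) <= 2 * size Ws.
Proof. by rewrite /all_end_times; elim: Ws => //= -[|x W] Ws IH; rewrite ?size_cat /=; lia. Qed.

Lemma mem_all_end_times Ws k tau :
  k < size Ws -> tau \in end_times (nth [::] Ws k) -> tau \in all_end_times Ws.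
Proof. by move=> kWs tau_k; apply/flatten_mapP; exists (nth [::] Ws k); rewrite ?mem_nth. Qed.

Lemma path_nbr (p : seq V) (a w : V) i : uniq p -> i.+1 < size p ->
  [set a; w] = [set nth a p i; nth a p i.+1] ->
  w = nth a p (index a p).+1 \/ w = nth a p (index a p).-1.
Proof.
move=> uniq_p ip aw_eq.
have neq : nth a p i != nth a p i.+1.
  by rewrite nth_uniq ?(ltnW ip) // neq_ltn ltnSn.
have /set2P[a_i|a_i1] : a \in [set nth a p i; nth a p i.+1] by rewrite -aw_eq set21.
- have idx : index a p = i by rewrite a_i index_uniq // ltnW.
  have /set2P[e|<-] : nth a p i.+1 \in [set a; w] by rewrite aw_eq set22.
    by move: neq; rewrite -a_i e eqxx.
  by left; rewrite idx.
- have idx : index a p = i.+1 by rewrite a_i1 index_uniq.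
  have /set2P[e|<-] : nth a p i \in [set a; w] by rewrite aw_eq set21.
    by move: neq; rewrite -a_i1 e eqxx.
  by right; rewrite idx.
Qed.

Lemma temporal_line_other_nbr_eq T E (a b x y : V) t1 t2 t3 :
  temporal_line T E -> edge_at T E a b t1 -> edge_at T E a x t2 -> edge_at T E a y t3 ->
  x <> b -> y <> b -> x = y.
Proof.
case=> p [_ uniq_p _ line_p] ab ax ay.
have nbr w t : edge_at T E a w t ->
    w = nth a p (index a p).+1 \/ w = nth a p (index a p).-1.
  by move=> aw; have [i ip] := (line_p a w).1 (ex_intro _ t aw); apply: path_nbr.
by case: (nbr _ _ ab) (nbr _ _ ax) (nbr _ _ ay) => -> [->|->] [->|->].
Qed.

Lemma edge_at_sym T E (u v : V) t : edge_at T E u v t -> edge_at T E v u t.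
Proof. by case=> tT uv; split; rewrite // setUC. Qed.

Lemma nested_visit_cases T E s z s' z' W W' j (c d : nat) :
  temporal_line T E -> is_walk T E s z W -> is_walk T E s' z' W' -> temp_disjoint W W' ->
  j.+1 < size W -> tsrc (nth x0 W j) = ttgt (nth x0 W j.+1) ->
  (tsrc (nth x0 W j), c, d) \in occ_intervals W' ->
  ttime (nth x0 W j) < c -> d < ttime (nth x0 W j.+1) ->
  c \in end_times W' \/
  exists2 i, i.+1 < size W' &
    [/\ tsrc (nth x0 W' i) = ttgt (nth x0 W' i.+1),
        c = ttime (nth x0 W' i) & d = ttime (nth x0 W' i.+1)].
Proof.
move=> line hW hW' disj jW ret occ_cd lt_c lt_d.
have hc' := walk_chain hW'.
have [W'_gt0 [[_ [-> _]]|[i iW' [a_i c_i d_i]]|[_ [-> _]]]] := (occ_intervalsP _ _ _ _).1 occ_cd;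
  [by left; apply: end_times_first| |by left; apply: end_times_last].
subst c d; right; exists i => //; split=> //.
have occ_b := occ_mid jW.
have [tgt_i lt_i] := (chainP W').1 hc' i iW'.
have x_b : tsrc (nth x0 W' i) <> ttgt (nth x0 W j).
  move=> x_b; have [l le_l occ_l] := occ_before hc' (ltnW iW').
  by rewrite x_b in occ_l; apply: disj occ_b occ_l _; lia.
have y_b : ttgt (nth x0 W' i.+1) <> ttgt (nth x0 W j).
  move=> y_b; have [r le_r occ_r] := occ_after hc' iW'.
  by rewrite y_b in occ_r; apply: disj occ_b occ_r _; lia.
apply: temporal_line_other_nbr_eq line _ _ _ x_b y_b.
- exact: walk_edge hW (ltnW jW).
- by rewrite a_i; apply/edge_at_sym/(walk_edge hW' (ltnW iW')).
- by rewrite a_i tgt_i; apply: walk_edge hW' iW'.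
Qed.

End Walks.

Lemma occ_intervals_le (V : finType) (W : seq (transition V)) v l r :
  chain W -> (v, l, r) \in occ_intervals W -> l <= r.
Proof.
case: W => // x W hc /(occ_intervalsP x)[_ [[_ [_ ->]]|[i iW [_ -> ->]]|[_ [_ ->]]]] //.
exact/ltnW/((chainP x _).1 hc i iW).2.
Qed.

Lemma count_windows_le (f : nat -> nat) n (P : pred nat) (ev : seq nat) :
  (forall j, j < n -> f j < f j.+1) ->
  (forall j, j < n -> P j -> has (fun tau => f j < tau < f j.+1) ev) ->
  count P (iota 0 n) <= size ev.
Proof.
move=> f_incr hit.
have f_mono : {in [pred i | i <= n] &, {homo f : i j / i <= j}}.
  apply: homo_leq_in => //.
  - exact: leq_trans.
  - by move=> i j; rewrite !inE => _ jn k; rewrite inE; lia.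
  - by move=> i; rewrite !inE => _ /f_incr/ltnW.
pose window j tau := f j < tau < f j.+1.
pose pick j := nth 0 ev (find (window j) ev).
have pickP j : j < n -> P j -> pick j \in ev /\ window j (pick j).
  by move=> jn /(hit j jn) hj; rewrite mem_nth -?has_find //; split=> //; apply: nth_find.
rewrite -size_filter -(size_map pick); apply: uniq_leq_size.
- rewrite map_inj_in_uniq ?filter_uniq ?iota_uniq //.
  move=> a b; rewrite !mem_filter !mem_iota /= => /andP[Pa an] /andP[Pb bn] eq_ab.
  have [_ /andP[lo_a hi_a]] := pickP a an Pa.
  have [_ /andP[lo_b hi_b]] := pickP b bn Pb.
  case: (ltngtP a b) => // [ab|ba].
  - have := f_mono a.+1 b (leq_trans ab (ltnW bn)) (ltnW bn) ab; lia.
  - have := f_mono b.+1 a (leq_trans ba (ltnW an)) (ltnW an) ba; lia.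
- move=> y /mapP[j]; rewrite mem_filter mem_iota => /andP[Pj jn] ->.
  by case: (pickP j jn Pj).
Qed.

Lemma total_length_set_nth (V : finType) (Ws : seq (seq (transition V))) k W :
  k < size Ws ->
  total_length (set_nth [::] Ws k W) + size (nth [::] Ws k) = total_length Ws + size W.
Proof.
rewrite /total_length; elim: Ws k => [|W' Ws IH] [|k] //= kWs; first lia.
by have := IH k kWs; lia.
Qed.

Section MinimalSolution.
Variables (V : finType) (T : nat) (E : nat -> {set {set V}}).
Variables (S : seq (V * V)) (Ws : seq (seq (transition V))).
Hypothesis line : temporal_line T E.
Hypothesis sol : is_solution T E S Ws.
Hypothesis minimal :
  forall Ws', is_solution T E S Ws' -> total_length Ws <= total_length Ws'.
Variable x0 : transition V.

Local Notation walk k := (nth [::] Ws k).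
Local Notation step k j := (nth x0 (walk k) j).

Lemma solution_walk k : k < size S ->
  is_walk T E (nth (tsrc x0, tsrc x0) S k).1 (nth (tsrc x0, tsrc x0) S k).2 (walk k).
Proof. by case: sol => _ walks _; apply: walks. Qed.

Lemma shortcut_solution k j :
  k < size S -> j.+1 < size (walk k) -> tsrc (step k j) = ttgt (step k j.+1) ->
  (forall m c d, m < size S -> m <> k ->
     (tsrc (step k j), c, d) \in occ_intervals (walk m) ->
     ~ (ttime (step k j) < c /\ d < ttime (step k j.+1))) ->
  is_solution T E S (set_nth [::] Ws k (shortcut (walk k) j)).
Proof.
have [size_Ws walks disj] := sol.
move=> kS jW ret no_nested; have hc := walk_chain (solution_walk kS).
split=> [|m d mS|m m' mS m'S mm'].
- by rewrite size_set_nth; lia.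
- rewrite nth_set_nth /=; case: eqP => [->|_]; last exact: walks.
  exact: shortcut_walk (walks k d kS) jW ret.
- rewrite !nth_set_nth /=; case: eqP => [mk|mk]; case: eqP => [m'k|m'k].
  + by case: (mm' (etrans mk (esym m'k))).
  + subst m; apply: shortcut_temp_disjoint hc jW ret (disj k m' kS m'S mm') _.
    by move=> c d; apply: no_nested; [|apply/nesym].
  + subst m'; apply/temp_disjoint_sym.
    apply: shortcut_temp_disjoint hc jW ret (disj k m kS mS (nesym mk)) _.
    by move=> c d; apply: no_nested.
  + exact: disj.
Qed.

Lemma minimal_backforth_blocked k j :
  k < size S -> j.+1 < size (walk k) -> tsrc (step k j) = ttgt (step k j.+1) ->
  exists m (c d : nat),
    [/\ m < size S, m <> k, (tsrc (step k j), c, d) \in occ_intervals (walk m),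
         ttime (step k j) < c & d < ttime (step k j.+1)].
Proof.
move=> kS jW ret; apply: NNPP => no_block.
have /minimal : is_solution T E S (set_nth [::] Ws k (shortcut (walk k) j)).
  apply: shortcut_solution => // m c d mS mk occ [lt_c lt_d].
  by apply: no_block; exists m, c, d.
have [size_Ws _ _] := sol.
have := total_length_set_nth (shortcut (walk k) j) (_ : k < size Ws).
by rewrite size_shortcut //; lia.
Qed.

Lemma backforth_window_has_end_time k j :
  k < size S -> j.+1 < size (walk k) -> tsrc (step k j) = ttgt (step k j.+1) ->
  has (fun tau => ttime (step k j) < tau < ttime (step k j.+1)) (all_end_times Ws).
Proof.
have [size_Ws _ disj] := sol.
move: {2}(ttime _ - _) (leqnn (ttime (step k j.+1) - ttime (step k j))) => n.
elim: n k j => [|n IH] k j window kS jW ret.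
  by have [_] := (chainP x0 _).1 (walk_chain (solution_walk kS)) j jW; lia.
have [m [c [d [mS mk occ lt_c lt_d]]]] := minimal_backforth_blocked kS jW ret.
have [c_end|[i iW [ret_m c_i d_i]]] := nested_visit_cases line (solution_walk kS)
  (solution_walk mS) (disj k m kS mS (nesym mk)) jW ret occ lt_c lt_d.
  have c_le_d := occ_intervals_le (walk_chain (solution_walk mS)) occ.
  by apply/hasP; exists c; [apply: mem_all_end_times c_end; lia|lia].
subst c d.
have /hasP[tau tau_end /andP[lt_tau tau_lt]] := IH m i ltac:(lia) mS iW ret_m.
by apply/hasP; exists tau => //; lia.
Qed.

End MinimalSolution.

Theorem mainTheorem8 (V : finType) (T : nat) (E : nat -> {set {set V}})
  (S : seq (V * V)) (Ws : seq (seq (transition V))) :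
  is_temporal_graph T E ->
  temporal_line T E ->
  is_solution T E S Ws ->
  (forall Ws', is_solution T E S Ws' -> total_length Ws <= total_length Ws') ->
  forall i, i < size S -> n_backforth (nth [::] Ws i) <= 2 * size S.
Proof.
move=> _ line sol minimal k kS.
have [size_Ws _ _] := sol.
have end_times_bound : size (all_end_times Ws) <= 2 * size S.
  by rewrite -size_Ws size_all_end_times.
have window := backforth_window_has_end_time line sol minimal.
rewrite /n_backforth; case Wk: (nth [::] Ws k) => [|x W] //.
have /(chainP x) hc := walk_chain (solution_walk sol x kS); rewrite Wk in hc.
apply: leq_trans end_times_bound.
apply: (@count_windows_le (fun j => ttime (nth x (x :: W) j))).
- by move=> j jW; have [] := hc j jW.
- by move=> j jW /and3P[/eqP ret _ _]; have := window x k j kS; rewrite Wk; apply.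
Qed.
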